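(* Let $n=2k+1$ with $k$ a positive integer, and let $(\Gamma,+)$ be an abelian group of order $n$ with neutral element $e$ such that $\sum_{g\in\Gamma} g = e$ and $2g\neq e$ for all $g\in\Gamma\setminus\{e\}$. Let $p,q$ be two new symbols and let $P_n=(\Gamma\times(\Gamma\setminus\{e\}))\cup\{p,q\}$. Define the lines $L_g=\{(h,g): h\in\Gamma\}$ for $g\in\Gamma\setminus\{e\}$; $l_{p_g}=\{(g,h): h\in\Gamma\setminus\{e\}\}\cup\{p\}$ for $g\in\Gamma$; $l_{q_g}=\{(h,h+g): h\in\Gamma,\ h+g\neq e\}\cup\{q\}$ for $g\in\Gamma$; and let $\mathcal{L}_n$ be the family of all these lines. Then the linear system $\mathcal{C}_{n,n+1}=(P_n,\mathcal{L}_n)$ satisfies $$\tau(\mathcal{C}_{n,n+1})=\nu_2(\mathcal{C}_{n,n+1})=n+1,$$ and it has the smallest possible number of lines for this property, in the following sense: $p$ and $q$ are points of largest and second largest degree (both equal to $n$) and $|\mathcal{L}_n|=3n-1=\deg(p)+\deg(q)+\nu_2(\mathcal{C}_{n,n+1})-2$, whereas every linear system $(P,\mathcal{L})$ with $|\mathcal{L}|>\nu_2(P,\mathcal{L})$ and $|\mathcal{L}|\le \deg(p')+\deg(q')+\nu_2(P,\mathcal{L})-3$, where $\deg(p')=\Delta(P,\mathcal{L})$ and $\deg(q')=\max\{\deg(x):x\in P\setminus\{p'\}\}$, satisfies $\tau(P,\mathcal{L})\le\nu_2(P,\mathcal{L})-1$.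
   Context: A linear system is a pair $(P,\mathcal{L})$ with $P$ a finite set of points and $\mathcal{L}$ a family of subsets of $P$ (lines) such that any two distinct lines share at most one point. A transversal is a set of points meeting every line; $\tau$ is the minimum cardinality of a transversal. A 2-packing is a set of lines no three of which have a common point; $\nu_2$ is the maximum cardinality of a 2-packing. $\deg(x)$ is the number of lines containing $x$ and $\Delta$ is the maximum degree. *)

From HB Require Import structures.
From mathcomp Require Import all_boot all_order all_algebra.
Set Implicit Arguments. Unset Strict Implicit. Unset Printing Implicit Defensive.
Import GRing.Theory.

Section LinearSystems.
Variable T : finType.

Definition linear_system (P : {set T}) (L : {set {set T}}) : Prop :=
  (forall l, l \in L -> l \subset P) /\
  (forall l1 l2, l1 \in L -> l2 \in L -> l1 != l2 -> #|l1 :&: l2| <= 1).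

Definition deg (L : {set {set T}}) (x : T) : nat := #|[set l in L | x \in l]|.

Definition Delta (P : {set T}) (L : {set {set T}}) : nat := \max_(x in P) deg L x.

Definition max_deg_except (P : {set T}) (L : {set {set T}}) (x0 : T) : nat :=
  \max_(x in P :\ x0) deg L x.

Definition transversal (P : {set T}) (L : {set {set T}}) (X : {set T}) : bool :=
  (X \subset P) && [forall l in L, X :&: l != set0].

(* minimum size of a transversal (defaults to #|P| if no transversal exists,
   which never happens when all lines are non-empty) *)
Definition tau (P : {set T}) (L : {set {set T}}) : nat :=
  \big[minn/#|P|]_(X : {set T} | transversal P L X) #|X|.

Definition two_packing (L : {set {set T}}) (S : {set {set T}}) : bool :=
  (S \subset L) && [forall x : T, #|[set l in S | x \in l]| <= 2].

Definition nu2 (L : {set {set T}}) : nat :=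
  \max_(S : {set {set T}} | two_packing L S) #|S|.

End LinearSystems.

Section Construction.
Variable G : finZmodType.

Definition CT := ((G * G) + bool)%type.
Definition pt_p : CT := inr true.
Definition pt_q : CT := inr false.

Definition Pn : {set CT} :=
  [set (inl (hg.1, hg.2) : CT) | hg in [set hg : G * G | hg.2 != 0%R]]
    :|: [set pt_p; pt_q].

Definition line_L (g : G) : {set CT} := [set (inl (h, g) : CT) | h : G].

Definition line_p (g : G) : {set CT} :=
  [set (inl (g, h) : CT) | h in [set h : G | h != 0%R]] :|: [set pt_p].

Definition line_q (g : G) : {set CT} :=
  [set (inl (h, (h + g)%R) : CT) | h in [set h : G | (h + g)%R != 0%R]] :|: [set pt_q].

Definition Ln : {set {set CT}} :=
  [set line_L g | g in [set g : G | g != 0%R]]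
    :|: [set line_p g | g : G] :|: [set line_q g | g : G].

End Construction.

From Pilot Require Import Defs.
From HB Require Import structures.
From mathcomp Require Import all_boot all_order all_algebra.
From mathcomp Require Import zify.
Set Implicit Arguments. Unset Strict Implicit. Unset Printing Implicit Defensive.
Import GRing.Theory.

(* Upper bounds on tau come from transversals X plus one point on each line
   missing X.  Let p have maximum degree and q the second largest degree b (for
   b <= 1 take X = {p}).  With X = {p, q} this gives tau <= 2 + |R|, R the
   lines avoiding p and q, which suffices unless some line l0 joins p and q.
   Then fix a second line A through p: either two lines of R meet (add their
   common point to X), or every line through q but not p meets A in a point of
   a line of R (replace q by these points, at most one per line of R), or some
   such line B does not, and {l0, A, B} together with R is a 2-packing.

   In C_{n,n+1} the lines L_g together with two lines through p form a
   2-packing of size n + 1.  Conversely a 2-packing has at most two lines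
   through p and two through q, and with l_{p_x} and l_{q_y} it cannot contain
   L_{x+y}, as all three pass through (x, x+y); since 2g <> e for g <> e, the
   nonzero sums x + y exclude enough lines L_g.  A transversal hits every L_g;
   if it avoids both p and q and had only n points, their first coordinates
   and their differences would both run over Gamma, so their second
   coordinates would sum to e, although they cover Gamma \ {e} with exactly
   one repetition. *)

Section LinearSystemBounds.
Variables (T : finType) (P : {set T}) (L : {set {set T}}).
Implicit Types (S : {set {set T}}) (X A B : {set T}) (l m r : {set T}) (p q x y z : T).

Definition pencil (S : {set {set T}}) (x : T) : {set {set T}} := [set l in S | x \in l].

Definition missing_lines (S : {set {set T}}) (X : {set T}) : {set {set T}} :=
  [set l in S | [disjoint X & l]].

Lemma disjointsU1 A B x :
  [disjoint x |: A & B] = (x \notin B) && [disjoint A & B].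
Proof. by rewrite !disjoints_subset subUset sub1set inE. Qed.

Lemma card_pencil S x : #|pencil S x| = deg S x.
Proof. by []. Qed.

Lemma pencil_sub S x : pencil S x \subset S.
Proof. by rewrite /pencil setIdE subsetIl. Qed.

Lemma tau_le_card X : Defs.transversal P L X -> tau P L <= #|X|.
Proof.
move=> trX; rewrite /tau; elim: (index_enum _) (mem_index_enum X) => // Y r IHr.
rewrite big_cons inE => /predU1P[<-|/IHr]; first by rewrite trX geq_minl.
by case: ifP => // _; rewrite geq_min => ->; rewrite orbT.
Qed.

Lemma deg_lt_card S x m : m \in S -> x \notin m -> deg S x < #|S|.
Proof.
move=> mS xm; apply: proper_card; rewrite properE pencil_sub /=.
by apply/subsetPn; exists m; rewrite // inE (negbTE xm) andbF.
Qed.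

Lemma nu2_ge_card S : two_packing L S -> #|S| <= nu2 L.
Proof. exact: leq_bigmax_cond. Qed.

Lemma deg_setU_le S1 S2 x : deg (S1 :|: S2) x <= deg S1 x + deg S2 x.
Proof.
change (#|pencil (S1 :|: S2) x| <= #|pencil S1 x| + #|pencil S2 x|).
have -> : pencil (S1 :|: S2) x = pencil S1 x :|: pencil S2 x.
  by apply/setP => l; rewrite !inE andb_orl.
exact: (leq_card_setU _ _).1.
Qed.

Lemma two_packingU S1 S2 :
    S1 :|: S2 \subset L -> (forall x, deg S1 x <= 2) -> (forall x, deg S2 x <= 1) ->
    (forall x l, l \in S2 -> x \in l -> deg S1 x <= 1) ->
  two_packing L (S1 :|: S2).
Proof.
move=> sub S1le2 S2le1 S12; rewrite /two_packing sub; apply/forallP => x.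
apply: leq_trans (deg_setU_le _ _ _) _.
have [S2x0|[l]] := set_0Vmem (pencil S2 x).
  by rewrite [deg S2 x]/deg -/(pencil S2 x) S2x0 cards0 addn0.
rewrite inE => /andP[lS2 xl]; exact: (leq_add (S12 x l lS2 xl) (S2le1 x)).
Qed.

Hypothesis L_linear : linear_system P L.
Hypothesis L_nonempty : forall l, l \in L -> l != set0.

Lemma point_of_line l x : l \in L -> x \in l -> x \in P.
Proof. by move=> /(proj1 L_linear) /subsetP; apply. Qed.

Lemma eq_common_point l1 l2 x y : l1 \in L -> l2 \in L -> l1 != l2 ->
  x \in l1 -> x \in l2 -> y \in l1 -> y \in l2 -> x = y.
Proof.
move=> l1L l2L l12 xl1 xl2 yl1 yl2; have [_ /(_ _ _ l1L l2L l12) meet1] := L_linear.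
by move/card_le1_eqP: meet1; apply; rewrite inE ?xl1 ?yl1.
Qed.

Lemma tau_le_card_missing X : X \subset P ->
  tau P L <= #|X| + #|missing_lines L X|.
Proof.
move=> XP; set M := missing_lines L X.
set Y := [set x : T | Some x \in [set [pick y in l] | l : {set T} in M]].
have pickM l : l \in M -> exists2 y, [pick y in l] = Some y & y \in l.
  rewrite inE => /andP[/L_nonempty/set0Pn[z zl] _].
  by case: pickP => [y yl|/(_ z)]; [exists y | rewrite zl].
have cardY : #|Y| <= #|M|.
  rewrite -(card_imset _ Some_inj).
  apply: leq_trans _ (leq_imset_card (fun l : {set T} => [pick y in l]) M).
  by apply/subset_leq_card/subsetP => _ /imsetP[x xY ->]; rewrite inE in xY.
apply: leq_trans (@tau_le_card (X :|: Y) _) _; last first.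
  by apply: leq_trans (leq_card_setU X Y).1 _; rewrite leq_add2l.
rewrite /Defs.transversal subUset XP /=; apply/andP; split.
  apply/subsetP => y; rewrite inE => /imsetP[l lM] eqy.
  have [z pz zl] := pickM l lM; move: eqy; rewrite pz => -[->].
  by case/setIdP: lM => lL _; apply: point_of_line zl.
apply/forallP => l; apply/implyP => lL; apply/set0Pn.
have [/set0Pn[x /setIP[xX xl]]|Xl0] := boolP (X :&: l != set0).
  by exists x; rewrite !inE xX xl.
have lM : l \in M by rewrite inE lL -setI_eq0; move/negbNE: Xl0.
have [y eqy yl] := pickM l lM.
by exists y; rewrite !inE yl andbT -eqy imset_f ?orbT.
Qed.

Lemma card_pencilI_le1 p q : p != q -> #|pencil L p :&: pencil L q| <= 1.
Proof.
move=> pq; apply/card_le1_eqP => l1 l2; rewrite !inE.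
move=> /andP[/andP[l1L pl1] /andP[_ ql1]] /andP[/andP[l2L pl2] /andP[_ ql2]].
apply/eqP; apply: contraNT pq => l21; apply/eqP.
exact: (eq_common_point l2L l1L l21).
Qed.

Lemma tau_le_pencil p : p \in P -> tau P L + deg L p <= #|L|.+1.
Proof.
move=> pP; have := tau_le_card_missing (X := [set p]); rewrite sub1set cards1 => /(_ pP).
have -> : missing_lines L [set p] = L :\: pencil L p.
  by apply/setP => l; rewrite !inE disjoints1; case: (l \in L); rewrite ?andbF ?andbT.
have := cardsID (pencil L p) L; rewrite (setIidPr (pencil_sub L p)) card_pencil.
lia.
Qed.

Section TwoPoints.
Variables p q : T.
Local Notation R := (missing_lines L [set p; q]).

Lemma missing_two_points : R = L :\: (pencil L p :|: pencil L q).
Proof.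
apply/setP => l; rewrite !inE disjointsU1 disjoints1 negb_or.
by case: (l \in L); rewrite ?andbT.
Qed.

Lemma card_missing_two_points :
  #|R| + deg L p + deg L q = #|L| + #|pencil L p :&: pencil L q|.
Proof.
rewrite -!card_pencil -addnA -cardsUI missing_two_points.
have := cardsID (pencil L p :|: pencil L q) L.
rewrite (setIidPr _) ?subUset ?pencil_sub //; lia.
Qed.

Lemma missing_lines_in r : r \in R -> [/\ r \in L, p \notin r & q \notin r].
Proof. by rewrite inE disjointsU1 disjoints1 => /and3P[]. Qed.

Hypotheses (pP : p \in P) (qP : q \in P) (pq : p != q).

Lemma tau_le_two_points : tau P L <= #|R|.+2.
Proof.
have := tau_le_card_missing (X := [set p; q]).
by rewrite cards2 pq subUset !sub1set pP qP => /(_ isT).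
Qed.

Lemma tau_le_meeting r1 r2 z : r1 \in R -> r2 \in R -> r1 != r2 ->
  z \in r1 -> z \in r2 -> tau P L <= #|R|.+1.
Proof.
move=> r1R r2R r12 zr1 zr2; have [r1L _ _] := missing_lines_in r1R.
have XP : [set p; q; z] \subset P.
  by rewrite !subUset !sub1set pP qP (point_of_line r1L zr1).
have cardX : #|[set p; q; z]| <= 3.
  by apply: leq_trans (leq_card_setU _ _).1 _; rewrite cards1 cards2 ltnS; case: (_ != _).
have missingX : missing_lines L [set p; q; z] \subset R :\ r1 :\ r2.
  apply/subsetP => l; rewrite !inE !disjoints_subset !subUset !sub1set !inE.
  move=> /andP[lL /andP[/andP[pl ql] zl]]; rewrite lL pl ql !andbT.
  by apply/andP; split; apply: contraNneq zl => ->.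
apply: leq_trans (tau_le_card_missing XP) _.
rewrite (cardsD1 r1 R) r1R (cardsD1 r2 (R :\ r1)) in_setD1 r2R eq_sym r12 !add1n.
by rewrite -addn3 [_ + 3]addnC leq_add ?(subset_leq_card missingX).
Qed.

Lemma tau_le_secant A1 : A1 \in L -> p \in A1 ->
    (forall l, l \in L -> q \in l -> p \notin l ->
       exists2 z, z \in A1 :&: l & exists2 r, r \in R & z \in r) ->
  tau P L <= #|R|.+1.
Proof.
move=> A1L pA1 secant.
set R' := [set r in R | A1 :&: r != set0].
pose f r := odflt p [pick z in A1 :&: r].
have fR' r : r \in R' -> f r \in A1 :&: r.
  rewrite inE => /andP[_ /set0Pn[z zAr]].
  by rewrite /f; case: pickP => [//|/(_ z)]; rewrite zAr.
have f_meet r z : r \in R -> z \in A1 -> z \in r -> f r = z.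
  move=> rR zA1 zr; have [rL pr _] := missing_lines_in rR.
  have rR' : r \in R' by rewrite inE rR; apply/set0Pn; exists z; rewrite inE zA1.
  have /setIP[fA1 fr] := fR' r rR'.
  by apply: (eq_common_point A1L rL _ fA1 fr zA1 zr); apply: contraNneq pr => <-.
have XP : p |: f @: R' \subset P.
  rewrite subUset sub1set pP; apply/subsetP => _ /imsetP[r rR' ->].
  have /setIP[fA1 _] := fR' r rR'; exact: point_of_line A1L fA1.
have := tau_le_card_missing XP.
have : missing_lines L (p |: f @: R') \subset R :\: R'.
  apply/subsetP => l /setIdP[lL]; rewrite disjointsU1 => /andP[pl disj].
  have ql : q \notin l.
    apply/negP => ql; have [z /setIP[zA1 zl] [r rR zr]] := secant l lL ql pl.
    have rR' : r \in R' by rewrite inE rR; apply/set0Pn; exists z; rewrite inE zA1.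
    move: disj; rewrite -setI_eq0 => /set0Pn; case; exists z.
    by rewrite inE zl -(f_meet r z) // imset_f.
  have lR : l \in R by rewrite inE lL disjointsU1 disjoints1 pl ql.
  rewrite in_setD lR andbT inE lR /= negbK; apply: contraTT disj => Al0.
  have lR' : l \in R' by rewrite inE lR.
  rewrite -setI_eq0; apply/set0Pn; exists (f l).
  by rewrite inE imset_f //; case/setIP: (fR' l lR').
move/subset_leq_card; have : #|p |: f @: R'| <= #|R'|.+1.
  by rewrite cardsU1 -add1n leq_add ?leq_b1 ?leq_imset_card.
have R'R : R' \subset R by rewrite /R' setIdE subsetIl.
have := cardsID R' R; rewrite (setIidPr R'R).
lia.
Qed.

Lemma nu2_ge_packing l0 A1 B : l0 \in L -> p \in l0 -> q \in l0 ->
    A1 \in L -> p \in A1 -> A1 != l0 -> B \in L -> q \in B -> B != l0 ->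
    (forall x, deg R x <= 1) ->
    (forall z r, z \in A1 -> z \in B -> r \in R -> z \notin r) ->
  #|R| + 3 <= nu2 L.
Proof.
move=> l0L pl0 ql0 A1L pA1 A1l0 BL qB Bl0 R_disj AB_off_R.
have at_p x : x \in l0 -> x \in A1 -> x = p.
  by move=> xl0 xA1; apply: (eq_common_point l0L A1L); rewrite // eq_sym.
have at_q x : x \in l0 -> x \in B -> x = q.
  by move=> xl0 xB; apply: (eq_common_point l0L BL); rewrite // eq_sym.
have pB : p \notin B by apply: contraNN pq => pB; rewrite (at_q p).
have A1B : A1 != B by apply: contraNneq pB => <-.
set S1 := l0 |: [set A1; B].
have cardS1 : #|S1| = 3.
  by rewrite /S1 cardsU1 cards2 !inE negb_or A1B !(eq_sym l0) A1l0 Bl0.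
have S1R : [disjoint S1 & R].
  rewrite disjoints_subset; apply/subsetP => l; rewrite in_setC => /setU1P[|/set2P[]] ->;
    by apply/negP => /missing_lines_in[_]; rewrite ?pl0 ?pA1 ?qB.
have packing : two_packing L (S1 :|: R).
  apply: two_packingU.
  - rewrite !subUset !sub1set l0L A1L BL; apply/subsetP => r.
    by case/missing_lines_in.
  - move=> x; have [m mS1 xm] : exists2 m, m \in S1 & x \notin m.
      have [xl0|] := boolP (x \in l0); last by exists l0; rewrite ?inE ?eqxx.
      have [xA1|] := boolP (x \in A1); last by exists A1; rewrite ?inE ?eqxx ?orbT.
      by exists B; rewrite ?inE ?eqxx ?orbT // (at_p x).
    by rewrite -ltnS -cardS1 (deg_lt_card mS1 xm).
  - exact: R_disj.
  - move=> x r rR xr; have [_ pr qr] := missing_lines_in rR.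
    have xp : x != p by apply: contraNneq pr => <-.
    have xq : x != q by apply: contraNneq qr => <-.
    have xAB : ~~ ((x \in A1) && (x \in B)).
      by apply/negP => /andP[xA1 xB]; move: (AB_off_R x r xA1 xB rR); rewrite xr.
    rewrite -card_pencil; apply/card_le1_eqP => u v; rewrite !inE.
    move=> /andP[/or3P[]/eqP-> xu] /andP[/or3P[]/eqP-> xv] //;
      first [ by case/eqP: xp; apply: at_p | by case/eqP: xq; apply: at_q
            | by case/negP: xAB; rewrite xu xv ].
have := nu2_ge_card packing.
by rewrite cardsU (disjoint_setI0 S1R) cards0 subn0 cardS1 addnC.
Qed.

Lemma tau_le_or_nu2_ge l0 A1 : l0 \in L -> p \in l0 -> q \in l0 ->
    A1 \in L -> p \in A1 -> A1 != l0 ->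
  tau P L <= #|R|.+1 \/ #|R| + 3 <= nu2 L.
Proof.
move=> l0L pl0 ql0 A1L pA1 A1l0.
have [secant|] := boolP [forall l in L, (q \in l) && (p \notin l) ==>
                           [exists z in A1 :&: l, exists r in R, z \in r]].
  left; apply: (tau_le_secant A1L pA1) => l lL ql pl.
  move/forall_inP/(_ l lL): secant; rewrite ql pl.
  move=> /exists_inP[z zAl /exists_inP[r rR zr]].
  by exists z => //; exists r.
case/forall_inPn => B BL; rewrite negb_imply => /andP[/andP[qB pB] /exists_inPn off].
have [|/existsPn R_disj] := boolP [exists x, 1 < deg R x].
  move=> /existsP[x /card_gt1P[r1 [r2 []]]].
  move=> /setIdP[r1R xr1] /setIdP[r2R xr2] r12; left.
  exact: tau_le_meeting r1R r2R r12 xr1 xr2.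
right; apply: (nu2_ge_packing l0L pl0 ql0 A1L pA1 A1l0 BL qB).
- by apply: contraNneq pB => ->.
- by move=> x; rewrite leqNgt R_disj.
- move=> z r zA1 zB rR; apply: contraNN (off z _) => [zr|]; last by rewrite inE zA1.
  by apply/exists_inP; exists r.
Qed.

End TwoPoints.

Lemma tau_lt_nu2 p : p \in P -> deg L p = Delta P L ->
  #|L| + 3 <= deg L p + max_deg_except P L p + nu2 L -> tau P L + 1 <= nu2 L.
Proof.
move=> pP degp budget.
have [b_le1|b_gt1] := leqP (max_deg_except P L p) 1.
  by have := tau_le_pencil pP; lia.
have [q /setD1P[qp qP] degq] : {q | q \in P :\ p & max_deg_except P L p = deg L q}.
  apply: eq_bigmax_cond; rewrite card_gt0; apply: contraTneq b_gt1 => P0.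
  by rewrite /max_deg_except P0 big_set0.
have degqp : deg L q <= deg L p by rewrite degp; apply: leq_bigmax_cond.
rewrite degq in budget b_gt1; have pq : p != q by rewrite eq_sym.
have tau_le2 := tau_le_two_points pP qP pq.
have cardR := card_missing_two_points p q.
have [I0|[l0]] := set_0Vmem (pencil L p :&: pencil L q).
  by rewrite I0 cards0 in cardR; lia.
rewrite inE => /andP[/setIdP[l0L pl0] /setIdP[_ ql0]].
have cardI1 := card_pencilI_le1 pq.
have [A1 /setIdP[A1L pA1] A1l0] : exists2 A1, A1 \in pencil L p & A1 != l0.
  have /card_gt1P[l1 [l2 [l1p l2p l12]]] : 1 < deg L p by lia.
  by case: (eqVneq l1 l0) => [e|]; [exists l2; rewrite // -e eq_sym | exists l1].
have [tau_le1|nu2_ge] := tau_le_or_nu2_ge pP qP pq l0L pl0 ql0 A1L pA1 A1l0.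
  by clear -budget cardR cardI1 tau_le1; lia.
by clear -budget cardR cardI1 tau_le2 nu2_ge; lia.
Qed.

End LinearSystemBounds.

Section SumsOverImages.
Variables (I : finType) (V : finNmodType) (f : I -> V).
Local Open Scope ring_scope.

Lemma sum_onto (A : {set I}) : #|A| = #|f @: A| -> \sum_(i in A) f i = \sum_(v in f @: A) v.
Proof. by move=> cardA; rewrite big_imset //; apply/imset_injP; rewrite cardA. Qed.

Lemma sum_onto_succ (A : {set I}) : #|A| = #|f @: A|.+1 ->
  exists2 i, i \in A & \sum_(a in A) f a = \sum_(v in f @: A) v + f i.
Proof.
move=> cardA.
have /dinjectivePn[i1 i1A [i2 /andP[i21 i2A] fi12]] : ~~ dinjectiveb f A.
  by apply/dinjectiveP => /imset_injP; rewrite cardA eqn_leq ltnn andbF.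
exists i1 => //.
have A'i2 : i2 \in A :\ i1 by rewrite in_setD1 i21.
have imA' : f @: (A :\ i1) = f @: A.
  apply/eqP; rewrite eqEsubset imsetS ?subD1set //=; apply/subsetP => _ /imsetP[a aA ->].
  by case: (eqVneq a i1) => [->|ai1]; rewrite ?fi12 imset_f // in_setD1 ai1.
rewrite (big_setD1 i1) //= addrC sum_onto imA' //.
by apply/eqP; rewrite -eqSS -cardA (cardsD1 i1 A) i1A.
Qed.

End SumsOverImages.

Section SmallSumsets.
Variable V : finZmodType.
Local Open Scope ring_scope.
Hypothesis V_no_involution : forall v : V, v != 0 -> v + v != 0.

Definition sumset (A B : {set V}) : {set V} := [set a + b | a in A, b in B].

Lemma sumset2_gt2 x1 x2 y1 y2 : x1 != x2 -> y1 != y2 ->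
  (2 < #|sumset [set x1; x2] [set y1; y2]|)%N.
Proof.
move=> x12 y12.
have mem x y : x \in [set x1; x2] -> y \in [set y1; y2] ->
    x + y \in sumset [set x1; x2] [set y1; y2].
  by move=> xA yB; apply: imset2_f.
have neqL (x y y' : V) : y != y' -> x + y != x + y' by rewrite (inj_eq (addrI x)).
have neqR (x x' y : V) : x != x' -> x + y != x' + y by rewrite (inj_eq (addIr y)).
apply/card_gt2P; have [e1|ne1] := eqVneq (x1 + y2) (x2 + y1).
  exists (x1 + y1), (x1 + y2), (x2 + y2).
  split; first by split; apply: mem; rewrite !inE eqxx ?orbT.
  split; [exact: neqL | exact: neqR |]; apply/eqP => e2.
  suff : (y2 - y1) + (y2 - y1) = 0 by apply/eqP/V_no_involution; rewrite subr_eq0 eq_sym.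
  apply/eqP; rewrite addrACA -opprD subr_eq0; apply/eqP.
  by apply: (addrI (x1 + x2)); rewrite addrACA e1 e2 addrACA (addrC x2).
exists (x1 + y1), (x1 + y2), (x2 + y1).
split; first by split; apply: mem; rewrite !inE eqxx ?orbT.
by split; [exact: neqL | exact: ne1 | rewrite eq_sym; exact: neqR].
Qed.

Lemma card_sumset_small (A B : {set V}) : (0 < #|A| <= 2)%N -> (0 < #|B| <= 2)%N ->
  (#|A| + #|B| <= #|sumset A B| + 1)%N.
Proof.
move=> /andP[/card_gt0P[a aA] A2] /andP[/card_gt0P[b bB] B2].
have geB : (#|B| <= #|sumset A B|)%N.
  rewrite -(card_imset B (addrI a)); apply/subset_leq_card/subsetP => _ /imsetP[y yB ->].
  exact: imset2_f.
have geA : (#|A| <= #|sumset A B|)%N.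
  rewrite -(card_imset A (addIr b)); apply/subset_leq_card/subsetP => _ /imsetP[x xA ->].
  exact: imset2_f.
have [A1|A_2] : (#|A| <= 1)%N \/ #|A| = 2 by lia.
  by lia.
have [B1|B_2] : (#|B| <= 1)%N \/ #|B| = 2 by lia.
  by lia.
have /cards2P[x1 [x2 [x12 defA]]] : #|A| == 2 by rewrite A_2.
have /cards2P[y1 [y2 [y12 defB]]] : #|B| == 2 by rewrite B_2.
by have := sumset2_gt2 x12 y12; rewrite -defA -defB A_2 B_2; lia.
Qed.

End SmallSumsets.

Section Construction.
Variable G : finZmodType.
Local Open Scope ring_scope.
Implicit Types (g h : G) (x : CT G).

Local Notation grid a b := (inl (a, b) : CT G).
Local Notation nonzero := [set g : G | g != 0].

Lemma mem_line_L g x : (x \in line_L g) = if x is inl hb then hb.2 == g else false.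
Proof.
apply/imsetP/idP => [[h _ ->] //|]; case: x => [[a b]|//] /= /eqP->.
by exists a.
Qed.

Lemma mem_line_p g x :
  (x \in line_p g) = if x is inl hb then (hb.1 == g) && (hb.2 != 0) else x == pt_p G.
Proof.
rewrite /line_p in_setU in_set1; case: x => [[a b]|bb] /=; last first.
  by case: imsetP => // -[].
rewrite orbF; apply/imsetP/andP => [[h]|[/eqP-> b0]]; first by rewrite inE => ? [-> ->].
by exists b; rewrite ?inE.
Qed.

Lemma mem_line_q g x :
  (x \in line_q g) = if x is inl hb then (hb.2 == hb.1 + g) && (hb.2 != 0) else x == pt_q G.
Proof.
rewrite /line_q in_setU in_set1; case: x => [[a b]|bb] /=; last first.
  by case: imsetP => // -[].
rewrite orbF; apply/imsetP/andP => [[h]|[/eqP-> b0]].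
  by rewrite inE => ? [-> ->]; rewrite eqxx.
by exists a; rewrite ?inE.
Qed.

Lemma mem_Pn x : (x \in Pn G) = if x is inl hb then hb.2 != 0 else true.
Proof.
rewrite /Pn in_setU in_set2; case: x => [[a b]|[]]; rewrite ?eqxx ?orbT //= orbF.
apply/imsetP/idP => [[[c d]]|b0]; first by rewrite inE => /= ? [_ ->].
by exists (a, b); rewrite ?inE.
Qed.

Lemma pt_p_Pn : pt_p G \in Pn G. Proof. by rewrite mem_Pn. Qed.
Lemma pt_q_Pn : pt_q G \in Pn G. Proof. by rewrite mem_Pn. Qed.

Lemma LnP l : l \in Ln G ->
  [\/ exists2 g, g != 0 & l = line_L g, exists g, l = line_p g | exists g, l = line_q g].
Proof.
rewrite /Ln !in_setU => /orP[/orP[/imsetP[g]|/imsetP[g _ ->]]|/imsetP[g _ ->]].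
- by rewrite inE => g0 ->; apply: Or31; exists g.
- by apply: Or32; exists g.
- by apply: Or33; exists g.
Qed.

Lemma line_L_Ln g : g != 0 -> line_L g \in Ln G.
Proof. by move=> g0; rewrite /Ln !in_setU imset_f ?inE. Qed.

Lemma line_p_Ln g : line_p g \in Ln G.
Proof. by rewrite /Ln !in_setU imset_f ?orbT. Qed.

Lemma line_q_Ln g : line_q g \in Ln G.
Proof. by rewrite /Ln !in_setU imset_f ?orbT. Qed.

Lemma meet_line_LL g h : g != h -> line_L g :&: line_L h \subset set0.
Proof.
move=> gh; apply/subsetP => -[[a b]|b]; rewrite in_setI !mem_line_L //=.
by move=> /andP[/eqP-> /eqP bh]; rewrite bh eqxx in gh.
Qed.

Lemma meet_line_Lp g h : line_L g :&: line_p h \subset [set grid h g].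
Proof.
apply/subsetP => -[[a b]|b]; rewrite in_setI mem_line_L mem_line_p in_set1 //=.
by move=> /andP[/eqP-> /andP[/eqP-> _]].
Qed.

Lemma meet_line_Lq g h : line_L g :&: line_q h \subset [set grid (g - h) g].
Proof.
apply/subsetP => -[[a b]|b]; rewrite in_setI mem_line_L mem_line_q in_set1 //=.
by move=> /andP[/eqP-> /andP[/eqP-> _]]; rewrite addrK.
Qed.

Lemma meet_line_pp g h : g != h -> line_p g :&: line_p h \subset [set pt_p G].
Proof.
move=> gh; apply/subsetP => -[[a b]|b]; rewrite in_setI !mem_line_p in_set1 /=; last by case/andP.
by move=> /andP[/andP[/eqP-> _] /andP[/eqP ah _]]; rewrite ah eqxx in gh.
Qed.

Lemma meet_line_pq g h : line_p g :&: line_q h \subset [set grid g (g + h)].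
Proof.
apply/subsetP => -[[a b]|b]; rewrite in_setI mem_line_p mem_line_q in_set1 /=.
  by move=> /andP[/andP[/eqP-> _] /andP[/eqP-> _]].
by move=> /andP[/eqP-> /eqP].
Qed.

Lemma meet_line_qq g h : g != h -> line_q g :&: line_q h \subset [set pt_q G].
Proof.
move=> gh; apply/subsetP => -[[a b]|b]; rewrite in_setI !mem_line_q in_set1 /=; last by case/andP.
by move=> /andP[/andP[/eqP-> _] /andP[/eqP /addrI gh' _]]; rewrite gh' eqxx in gh.
Qed.

Lemma linear_system_Cn : linear_system (Pn G) (Ln G).
Proof.
split.
  move=> l /LnP[[g g0 ->]|[g ->]|[g ->]]; apply/subsetP => -[[a b]|[]];
    rewrite ?mem_line_L ?mem_line_p ?mem_line_q mem_Pn //= ?eqxx //.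
  - by move=> /eqP->.
  - by case/andP.
  - by case/andP.
have le1 (l1 l2 : {set CT G}) c : l1 :&: l2 \subset [set c] -> (#|l1 :&: l2| <= 1)%N.
  by move/subset_leq_card; rewrite cards1.
have le1C (l1 l2 : {set CT G}) c : l2 :&: l1 \subset [set c] -> (#|l1 :&: l2| <= 1)%N.
  by rewrite setIC; apply: le1.
move=> l1 l2 /LnP[[g _ ->]|[g ->]|[g ->]] /LnP[[h _ ->]|[h ->]|[h ->]] l12;
  do ?[exact: le1 (meet_line_Lp _ _) | exact: le1 (meet_line_Lq _ _)
      | exact: le1 (meet_line_pq _ _) | exact: le1C (meet_line_Lp _ _)
      | exact: le1C (meet_line_Lq _ _) | exact: le1C (meet_line_pq _ _)].
- apply: leq_trans (subset_leq_card (meet_line_LL _)) _; rewrite ?cards0 //.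
  by apply: contraNneq l12 => ->.
- by apply: le1 (meet_line_pp _); apply: contraNneq l12 => ->.
- by apply: le1 (meet_line_qq _); apply: contraNneq l12 => ->.
Qed.

Lemma card_nonzero : #|nonzero| = #|G|.-1.
Proof. by rewrite -(cardsC1 0); apply: eq_card => g; rewrite !inE. Qed.

Lemma line_L_inj : injective (@line_L G).
Proof.
by move=> g h gh; have := mem_line_L h (grid 0 g); rewrite -gh mem_line_L /= eqxx => /esym/eqP.
Qed.

Lemma pencil_pt_p : pencil (Ln G) (pt_p G) = [set line_p g | g : G].
Proof.
apply/setP => l; rewrite inE; apply/andP/imsetP => [[/LnP[[g _ ->]|[g ->]|[g ->]]]|[g _ ->]].
- by rewrite mem_line_L.
- by exists g.
- by rewrite mem_line_q.
- by rewrite line_p_Ln mem_line_p.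
Qed.

Lemma pencil_pt_q : pencil (Ln G) (pt_q G) = [set line_q g | g : G].
Proof.
apply/setP => l; rewrite inE; apply/andP/imsetP => [[/LnP[[g _ ->]|[g ->]|[g ->]]]|[g _ ->]].
- by rewrite mem_line_L.
- by rewrite mem_line_p.
- by exists g.
- by rewrite line_q_Ln mem_line_q.
Qed.

Lemma pencil_grid_sub a b :
  pencil (Ln G) (grid a b) \subset [set line_L b; line_p a; line_q (b - a)].
Proof.
apply/subsetP => l; rewrite inE => /andP[/LnP[[g _ ->]|[g ->]|[g ->]]].
- by rewrite mem_line_L /= => /eqP->; rewrite !inE eqxx.
- by rewrite mem_line_p /= => /andP[/eqP-> _]; rewrite !inE eqxx orbT.
- by rewrite mem_line_q /= => /andP[/eqP-> _]; rewrite !inE (addrC a) addrK eqxx !orbT.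
Qed.

Lemma deg_grid a b : (deg (Ln G) (grid a b) <= 3)%N.
Proof.
apply: leq_trans (subset_leq_card (pencil_grid_sub a b)) _.
by apply: leq_trans (leq_card_setU _ _).1 _; rewrite cards1 cards2; case: (_ != _).
Qed.

Section NontrivialGroup.
Hypothesis G_gt1 : (1 < #|G|)%N.

Lemma exists_nonzero : exists w : G, w != 0.
Proof.
have /card_gt1P[x [y [_ _ xy]]] := G_gt1.
by case: (eqVneq x 0) => [x0|]; [exists y; rewrite -x0 eq_sym | exists x].
Qed.

Lemma line_p_inj : injective (@line_p G).
Proof.
move=> g h gh; have [w w0] := exists_nonzero.
by have := mem_line_p h (grid g w); rewrite -gh !mem_line_p /= eqxx w0 => /esym/andP[/eqP].
Qed.

Lemma line_q_inj : injective (@line_q G).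
Proof.
move=> g h gh; have [w w0] := exists_nonzero.
have := mem_line_q h (grid (w - g) w); rewrite -gh !mem_line_q /= subrK eqxx w0.
by move=> /esym/andP[/eqP wh _]; apply: (addrI (w - g)); rewrite subrK -wh.
Qed.

Lemma deg_pt_p : deg (Ln G) (pt_p G) = #|G|.
Proof. by rewrite -card_pencil pencil_pt_p card_imset ?cardsT //; apply: line_p_inj. Qed.

Lemma deg_pt_q : deg (Ln G) (pt_q G) = #|G|.
Proof. by rewrite -card_pencil pencil_pt_q card_imset ?cardsT //; apply: line_q_inj. Qed.

Lemma card_Ln : #|Ln G| = (3 * #|G|).-1.
Proof.
have Lp0 : [set line_L g | g in nonzero] :&: [set line_p g | g : G] = set0.
  apply/setP => l; rewrite !inE; apply/negP => /andP[/imsetP[g _ ->] /imsetP[h _ gh]].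
  by have := mem_line_L g (pt_p G); rewrite gh mem_line_p eqxx.
have Lpq0 : ([set line_L g | g in nonzero] :|: [set line_p g | g : G])
              :&: [set line_q g | g : G] = set0.
  apply/setP => l; rewrite !inE; apply/negP => /andP[/orP[]/imsetP[g _ ->] /imsetP[h _ gh]].
    by have := mem_line_L g (pt_q G); rewrite gh mem_line_q eqxx.
  by have := mem_line_p g (pt_q G); rewrite gh mem_line_q eqxx.
rewrite /Ln !cardsU Lp0 Lpq0 !cards0 !subn0 card_in_imset; last first.
  by move=> ? ? _ _; apply: line_L_inj.
rewrite !card_imset ?cardsT ?card_nonzero; [|exact: line_q_inj|exact: line_p_inj].
by rewrite -!subn1; move: G_gt1; set n := #|G|; lia.
Qed.

Lemma deg_Ln_le x : (2 < #|G|)%N -> (deg (Ln G) x <= #|G|)%N.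
Proof.
case: x => [[a b]|[]] G_gt2; first exact: leq_trans (deg_grid a b) G_gt2.
  by rewrite deg_pt_p.
by rewrite deg_pt_q.
Qed.

Lemma Delta_Cn : (2 < #|G|)%N -> Delta (Pn G) (Ln G) = #|G|.
Proof.
move=> G_gt2; apply/eqP; rewrite eqn_leq; apply/andP; split.
  by apply/bigmax_leqP => x _; apply: deg_Ln_le.
by rewrite -{1}deg_pt_p; apply: leq_bigmax_cond; apply: pt_p_Pn.
Qed.

Lemma max_deg_except_Cn : (2 < #|G|)%N -> max_deg_except (Pn G) (Ln G) (pt_p G) = #|G|.
Proof.
move=> G_gt2; apply/eqP; rewrite eqn_leq; apply/andP; split.
  by apply/bigmax_leqP => x _; apply: deg_Ln_le.
by rewrite -{1}deg_pt_q; apply: leq_bigmax_cond; rewrite in_setD1 pt_q_Pn.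
Qed.

Lemma nu2_ge_Cn : (#|G|.+1 <= nu2 (Ln G))%N.
Proof.
have [w w0] := exists_nonzero.
set S1 := [set line_p 0; line_p w]; set SL := [set line_L g | g in nonzero].
have cardS1 : #|S1| = 2%N by rewrite cards2 (inj_eq line_p_inj) eq_sym w0.
have cardSL : #|SL| = #|G|.-1.
  by rewrite card_in_imset ?card_nonzero // => g h _ _; apply: line_L_inj.
have S1SL : [disjoint S1 & SL].
  rewrite disjoints_subset; apply/subsetP => _ /set2P[]-> ; rewrite inE;
    by apply/imsetP => -[g _ /setP/(_ (pt_p G))]; rewrite mem_line_p mem_line_L eqxx.
have packing : two_packing (Ln G) (S1 :|: SL).
  apply: two_packingU.
  - rewrite !subUset !sub1set !line_p_Ln /=; apply/subsetP => _ /imsetP[g + ->].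
    by rewrite inE; apply: line_L_Ln.
  - move=> x; rewrite -card_pencil -cardS1; apply/subset_leq_card.
    by rewrite /pencil setIdE subsetIl.
  - move=> x; rewrite -card_pencil; apply/card_le1_eqP => u v.
    move=> /setIdP[/imsetP[g _ ->{u}] xg] /setIdP[/imsetP[h _ ->{v}] xh].
    have [->//|gh] := eqVneq h g.
    by have := subsetP (meet_line_LL gh) x; rewrite in_setI xg xh inE => /(_ isT).
  - move=> x _ /imsetP[g _ ->] xg; rewrite -card_pencil; apply/card_le1_eqP => u v.
    have x0w : x \notin line_p 0 :&: line_p w.
      apply: contraTN xg => /(subsetP (meet_line_pp _)); rewrite eq_sym w0 inE => /(_ isT)/eqP->.
      by rewrite mem_line_L.
    rewrite !inE => /andP[/orP[]/eqP-> xu] /andP[/orP[]/eqP-> xv] //;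
      by rewrite in_setI xu xv in x0w.
have := nu2_ge_card packing.
rewrite cardsU (disjoint_setI0 S1SL) cards0 subn0 cardS1 cardSL add2n prednK //.
by apply/card_gt0P; exists 0.
Qed.

Lemma packing_no_concurrent S (x y : G) : two_packing (Ln G) S ->
  line_p x \in S -> line_q y \in S -> x + y != 0 -> line_L (x + y) \notin S.
Proof.
move=> /andP[_ /forallP/(_ (grid x (x + y)))] S2 px qy xy0; apply: contraTN S2 => Ls.
rewrite -ltnNge; apply/card_gt2P; exists (line_p x), (line_q y), (line_L (x + y)).
split; split; first [ apply/setIdP; split=> //
                    | apply/negP => /eqP/setP].
- by rewrite mem_line_p /= eqxx xy0.
- by rewrite mem_line_q /= eqxx xy0.
- by rewrite mem_line_L /=.
- by move/(_ (pt_p G)); rewrite mem_line_p mem_line_q eqxx.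
- by move/(_ (pt_q G)); rewrite mem_line_q mem_line_L eqxx.
- by move/(_ (pt_p G)); rewrite mem_line_p mem_line_L eqxx.
Qed.

Lemma nu2_le_Cn : (forall g : G, g != 0 -> g + g != 0) -> (nu2 (Ln G) <= #|G|.+1)%N.
Proof.
move=> G_odd; apply/bigmax_leqP => S packS; have /andP[SLn /forallP S2] := packS.
set XS := [set x | line_p x \in S]; set YS := [set y | line_q y \in S].
set IS := [set g | (g != 0) && (line_L g \in S)].
have cardS : (#|S| <= #|IS| + #|XS| + #|YS|)%N.
  have : S \subset (@line_L G) @: IS :|: (@line_p G) @: XS :|: (@line_q G) @: YS.
    apply/subsetP => l lS; rewrite !in_setU.
    have /LnP[[g g0 defl]|[x defl]|[y defl]] := subsetP SLn l lS; rewrite defl in lS *.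
    - by rewrite imset_f // inE g0 lS.
    - by rewrite imset_f ?orbT // inE.
    - by rewrite imset_f ?orbT // inE.
  move/subset_leq_card/leq_trans; apply.
  apply: leq_trans (leq_card_setU _ _).1 _; rewrite leq_add ?leq_imset_card //.
  by apply: leq_trans (leq_card_setU _ _).1 _; rewrite leq_add ?leq_imset_card.
have cardXS : (#|XS| <= 2)%N.
  rewrite -(card_imset XS line_p_inj); apply: leq_trans (S2 (pt_p G)).
  apply/subset_leq_card/subsetP => _ /imsetP[x + ->]; rewrite inE => px.
  by apply/setIdP; rewrite mem_line_p.
have cardYS : (#|YS| <= 2)%N.
  rewrite -(card_imset YS line_q_inj); apply: leq_trans (S2 (pt_q G)).
  apply/subset_leq_card/subsetP => _ /imsetP[y + ->]; rewrite inE => qy.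
  by apply/setIdP; rewrite mem_line_q.
set Z := 0 |: sumset XS YS.
have IZ : [disjoint IS & Z].
  rewrite -setI_eq0; apply/eqP/setP => g; rewrite !inE; apply/negP.
  case/andP => /andP[g0 Lg] /orP[/eqP g0'|]; first by rewrite g0' eqxx in g0.
  case/imset2P => x y; rewrite !inE => px qy defg.
  by move: Lg; rewrite defg; apply/negP/packing_no_concurrent; rewrite -?defg.
have cardIZ : (#|IS| + #|Z| <= #|G|)%N.
  by have := (leq_card_setU IS Z).2; rewrite IZ => /eqP <-; apply: max_card.
have Z_gt0 : (0 < #|Z|)%N by apply/card_gt0P; exists 0; rewrite setU11.
have sumset_Z : (#|sumset XS YS| <= #|Z|)%N by rewrite subset_leq_card ?subsetUr.
have [XS0|XS_gt0] := posnP #|XS|; first by lia.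
have [YS0|YS_gt0] := posnP #|YS|; first by lia.
have := card_sumset_small G_odd (A := XS) (B := YS); rewrite XS_gt0 YS_gt0 cardXS cardYS.
by move=> /(_ isT isT); lia.
Qed.

End NontrivialGroup.

Definition grid_part (X : {set CT G}) : {set G * G} := [set y | inl y \in X].

Lemma card_grid_part (X : {set CT G}) (B : {set bool}) :
  [set inr b | b in B] \subset X -> (#|grid_part X| + #|B| <= #|X|)%N.
Proof.
move=> BX; rewrite -(card_imset (grid_part X) (@inl_inj _ bool)).
rewrite -(card_imset B (@inr_inj (G * G) _)).
set A := [set inl y | y in _]; set B' := [set inr b | b in B].
have AB : [disjoint A & B'].
  rewrite -setI_eq0; apply/eqP/setP => x; rewrite !inE.
  by apply/negP => /andP[/imsetP[? _ ->] /imsetP[]].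
have -> : (#|A| + #|B'| = #|A :|: B'|)%N by apply/esym/eqP; rewrite (leq_card_setU A B').2.
apply: subset_leq_card; rewrite subUset BX andbT.
by apply/subsetP => _ /imsetP[y + ->]; rewrite inE.
Qed.

Section Transversal.
Variable X : {set CT G}.
Hypothesis trX : Defs.transversal (Pn G) (Ln G) X.
Local Notation Y := (grid_part X).

Lemma transversal_grid_hit l : l \in Ln G ->
  (forall b, inr b \in X -> inr b \notin l) -> exists2 y, y \in Y & inl y \in l.
Proof.
move=> lL noinr; have /andP[_ /forall_inP/(_ l lL)/set0Pn[[y|b] /setIP[xX xl]]] := trX.
  by exists y; rewrite ?inE.
by rewrite (negbTE (noinr b xX)) in xl.
Qed.

Lemma grid_part_cover_L : nonzero \subset [set y.2 | y in Y].
Proof.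
apply/subsetP => g; rewrite inE => g0.
have [|y yY] := transversal_grid_hit (line_L_Ln g0); first by move=> b _; rewrite mem_line_L.
by rewrite mem_line_L => /eqP <-; apply: imset_f.
Qed.

Lemma grid_part_cover_p : pt_p G \notin X -> [set: G] \subset [set y.1 | y in Y].
Proof.
move=> pX; apply/subsetP => g _.
have [|y yY] := transversal_grid_hit (line_p_Ln g).
  by move=> b bX; rewrite mem_line_p; apply: contraNneq pX => <-.
by rewrite mem_line_p => /andP[/eqP <- _]; apply: imset_f.
Qed.

Lemma grid_part_cover_q : pt_q G \notin X -> [set: G] \subset [set y.2 - y.1 | y in Y].
Proof.
move=> qX; apply/subsetP => g _.
have [|y yY] := transversal_grid_hit (line_q_Ln g).
  by move=> b bX; rewrite mem_line_q; apply: contraNneq qX => <-.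
by rewrite mem_line_q => /andP[/eqP yg _]; apply/imsetP; exists y; rewrite // yg addrC addKr.
Qed.

Lemma grid_part_nonzero : [set y.2 | y in Y] \subset nonzero.
Proof.
apply/subsetP => _ /imsetP[y yY ->]; rewrite inE.
by have /andP[/subsetP/(_ (inl y)) + _] := trX; rewrite mem_Pn; apply; rewrite inE in yY.
Qed.

End Transversal.

Definition X0 : {set CT G} := pt_p G |: (pt_q G |: [set grid 0 g | g in nonzero]).

Lemma transversal_X0 : Defs.transversal (Pn G) (Ln G) X0.
Proof.
apply/andP; split.
  apply/subsetP => x /setU1P[->|/setU1P[->|/imsetP[g]]]; rewrite ?mem_Pn //.
  by rewrite inE => g0 ->.
apply/forall_inP => l /LnP[[g g0 ->]|[g ->]|[g ->]]; apply/set0Pn.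
- by exists (grid 0 g); rewrite in_setI mem_line_L eqxx andbT !in_setU1 imset_f ?orbT ?inE.
- by exists (pt_p G); rewrite in_setI mem_line_p eqxx andbT setU11.
- by exists (pt_q G); rewrite in_setI mem_line_q eqxx andbT !in_setU1 eqxx orbT.
Qed.

Lemma card_X0 : (#|X0| <= #|G|.+1)%N.
Proof.
rewrite /X0 !cardsU1.
apply: leq_trans (leq_add (leq_b1 _) (leq_add (leq_b1 _) (leq_imset_card _ _))) _.
by rewrite card_nonzero !add1n prednK //; apply/card_gt0P; exists 0.
Qed.

Section GroupSum.
Hypothesis sum0 : \sum_(g : G) g = 0.

Lemma sum_setT_eq0 : \sum_(g in [set: G]) g = 0.
Proof. by rewrite -[RHS]sum0; apply: eq_bigl => g; rewrite inE. Qed.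

Lemma sum_nonzero_eq0 : \sum_(g in nonzero) g = 0.
Proof. by rewrite -[RHS]sum0 [RHS](bigD1 0) //= add0r; apply: eq_bigl => g; rewrite inE. Qed.

Lemma grid_cover_card_neq (Y : {set G * G}) :
    [set y.1 | y in Y] = [set: G] -> [set y.2 - y.1 | y in Y] = [set: G] ->
    [set y.2 | y in Y] = nonzero ->
  #|Y| != #|G|.
Proof.
move=> fstY diffY sndY; apply/eqP => cardY.
have sum1 : \sum_(y in Y) y.1 = 0 by rewrite sum_onto fstY ?cardsT ?sum_setT_eq0.
have sum21 : \sum_(y in Y) (y.2 - y.1) = 0.
  by rewrite (sum_onto (f := fun y : G * G => y.2 - y.1)) diffY ?cardsT ?sum_setT_eq0.
have sum2 : \sum_(y in Y) y.2 = 0.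
  rewrite (eq_bigr (fun y => y.1 + (y.2 - y.1))) => [|y _]; last by rewrite addrC subrK.
  by rewrite big_split /= sum1 sum21 addr0.
have [|y yY] := sum_onto_succ (f := snd) (A := Y).
  by rewrite sndY card_nonzero cardY prednK //; apply/card_gt0P; exists 0.
rewrite sndY sum_nonzero_eq0 add0r sum2 => /esym/eqP y20.
by have := imset_f snd yY; rewrite sndY inE y20.
Qed.

Lemma transversal_card_gt X : Defs.transversal (Pn G) (Ln G) X -> (#|G| < #|X|)%N.
Proof.
move=> trX; have cardY1 : (#|G| <= #|grid_part X|.+1)%N.
  apply: leq_trans (leqSpred _) _; rewrite ltnS -card_nonzero.
  apply: leq_trans (leq_imset_card snd (grid_part X)).
  exact: subset_leq_card (grid_part_cover_L trX).
have cardY (f : G * G -> G) : [set: G] \subset f @: grid_part X -> (#|G| <= #|grid_part X|)%N.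
  by move/subset_leq_card; rewrite cardsT => /leq_trans; apply; apply: leq_imset_card.
have [pX|pX] := boolP (pt_p G \in X); have [qX|qX] := boolP (pt_q G \in X).
- have := @card_grid_part X [set: bool]; rewrite cardsT card_bool.
  have -> : [set inr b | b in [set: bool]] \subset X.
    by apply/subsetP => _ /imsetP[[] _ ->].
  by move=> /(_ isT); lia.
- have := @card_grid_part X [set true]; rewrite imset_set1 sub1set cards1 => /(_ pX).
  by have := cardY _ (grid_part_cover_q trX qX); lia.
- have := @card_grid_part X [set false]; rewrite imset_set1 sub1set cards1 => /(_ qX).
  by have := cardY _ (grid_part_cover_p trX pX); lia.
have onto (f : G * G -> G) : [set: G] \subset f @: grid_part X -> f @: grid_part X = [set: G].
  by move=> fY; apply/eqP; rewrite eqEsubset subsetT.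
have sndY : [set y.2 | y in grid_part X] = nonzero.
  by apply/eqP; rewrite eqEsubset (grid_part_nonzero trX) (grid_part_cover_L trX).
have := grid_cover_card_neq (onto _ (grid_part_cover_p trX pX))
          (onto _ (grid_part_cover_q trX qX)) sndY.
have := cardY _ (grid_part_cover_p trX pX).
have := @card_grid_part X set0; rewrite imset0 sub0set cards0 => /(_ isT).
lia.
Qed.

Lemma tau_Cn : tau (Pn G) (Ln G) = #|G|.+1.
Proof.
apply/eqP; rewrite eqn_leq (leq_trans (tau_le_card transversal_X0) card_X0) /=.
rewrite /tau; apply: (big_ind (fun m => #|G| < m)%N) => [|m1 m2|X].
- apply: leq_trans (transversal_card_gt transversal_X0) _; apply: subset_leq_card.
  by case/andP: transversal_X0.
- by rewrite leq_min => ->.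
- exact: transversal_card_gt.
Qed.

End GroupSum.

End Construction.

Theorem theorem3p2 :
  (forall (G : finZmodType) (k : nat),
      0 < k -> #|G| = k.*2.+1 ->
      (\sum_(g : G) g)%R = 0%R ->
      (forall g : G, g != 0%R -> (g + g)%R != 0%R) ->
      let n := k.*2.+1 in
      [/\ linear_system (Pn G) (Ln G),
          tau (Pn G) (Ln G) = n.+1,
          nu2 (Ln G) = n.+1,
          [/\ deg (Ln G) (pt_p G) = n, deg (Ln G) (pt_q G) = n,
              Delta (Pn G) (Ln G) = deg (Ln G) (pt_p G),
              max_deg_except (Pn G) (Ln G) (pt_p G) = deg (Ln G) (pt_q G)
            & (pt_p G \in Pn G) && (pt_q G \in Pn G)]
        & #|Ln G| = 3 * n - 1 /\
          #|Ln G| + 2 = deg (Ln G) (pt_p G) + deg (Ln G) (pt_q G) + nu2 (Ln G)])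
  /\
  (forall (T : finType) (P : {set T}) (L : {set {set T}}) (p' : T),
      linear_system P L ->
      (forall l, l \in L -> l != set0) ->
      p' \in P -> deg L p' = Delta P L ->
      nu2 L < #|L| ->
      #|L| + 3 <= deg L p' + max_deg_except P L p' + nu2 L ->
      tau P L + 1 <= nu2 L).
Proof.
split=> [G k k_gt0 cardG sum0 G_odd n|T P L p' L_linear L_nonempty p'P degp' _].
  have G_gt2 : 2 < #|G| by rewrite cardG -addnn; lia.
  have G_gt1 := ltnW G_gt2.
  have nu2E : nu2 (Ln G) = #|G|.+1 by apply/eqP; rewrite eqn_leq nu2_le_Cn // nu2_ge_Cn.
  rewrite /n -cardG deg_pt_p // deg_pt_q // Delta_Cn // max_deg_except_Cn // nu2E.
  rewrite card_Ln // tau_Cn // pt_p_Pn pt_q_Pn subn1.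
  by split=> //; [exact: linear_system_Cn | split=> //; rewrite -subn1; lia].
exact: tau_lt_nu2.
Qed.
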